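(* Let $r_0,r_1,r_2\ge 1$ with $r_1<r_0$ and $r_1<r_2$, and let $L=\mathfrak{g}(r_0,r_1,r_2)$. Then $b(L)=r_1(r_0+r_2-r_1)$.
   Context: All Lie algebras are over an algebraically closed field $\mathbf{k}$ of characteristic zero. $\mathcal{P}(r_0,r_1,r_2)$ is the poset on $\{b_1,\dots,b_{r_0},m_1,\dots,m_{r_1},t_1,\dots,t_{r_2}\}$ whose strict relations are exactly $b_i\prec m_j$, $m_j\prec t_k$ and $b_i\prec t_k$ for all $i,j,k$. $\mathfrak{g}(r_0,r_1,r_2)$ denotes the nilpotent Lie poset algebra $\mathfrak{g}^{\prec}(\mathcal{P}(r_0,r_1,r_2))$: the Lie algebra under the commutator bracket spanned by matrix units $E_{p,q}$ with $p\prec q$. The breadth of a Lie algebra $L$ is $b(L)=\max_{x\in L}\operatorname{rank}(\mathrm{ad}_x)$, where $\mathrm{ad}_x=[x,-]$. *)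

From HB Require Import structures.
From mathcomp Require Import all_boot all_order all_algebra.
Set Implicit Arguments. Unset Strict Implicit. Unset Printing Implicit Defensive.
Import GRing.Theory.
Local Open Scope ring_scope.

(* The poset P(r0,r1,r2) on 'I_(r0+r1+r2): indices < r0 are b_1..b_r0,
   indices in [r0, r0+r1) are m_1..m_r1, the rest are t_1..t_r2. *)
Definition plevel (r0 r1 r2 : nat) (i : 'I_(r0 + r1 + r2)) : nat :=
  if (i < r0)%N then 0%N else if (i < r0 + r1)%N then 1%N else 2%N.

Definition pprec (r0 r1 r2 : nat) (i j : 'I_(r0 + r1 + r2)) : bool :=
  (plevel i < plevel j)%N.

Definition in_gP (F : fieldType) (r0 r1 r2 : nat) (x : 'M[F]_(r0 + r1 + r2)) : Prop :=
  forall i j, ~~ pprec i j -> x i j = 0.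

Definition lie_br (F : fieldType) (n : nat) (x y : 'M[F]_n) : 'M[F]_n :=
  x *m y - y *m x.

(* Matrix whose rows are ad_x applied to the basis E_{p,q} (p < q) of
   g(r0,r1,r2) (rows for non-relations are zero); its rank is rank(ad_x). *)
Definition ad_mx (F : fieldType) (r0 r1 r2 : nat) (x : 'M[F]_(r0 + r1 + r2)) :
  'M[F]_(#|{: 'I_(r0 + r1 + r2) * 'I_(r0 + r1 + r2)}|,
         (r0 + r1 + r2) * (r0 + r1 + r2)) :=
  \matrix_(k < #|{: 'I_(r0 + r1 + r2) * 'I_(r0 + r1 + r2)}|)
    let pq := enum_val k in
    if pprec pq.1 pq.2 then mxvec (lie_br x (delta_mx pq.1 pq.2)) else 0.

Definition ad_rank (F : fieldType) (r0 r1 r2 : nat) (x : 'M[F]_(r0 + r1 + r2)) : nat :=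
  \rank (ad_mx x).

Definition is_breadth (F : fieldType) (r0 r1 r2 : nat) (b : nat) : Prop :=
  (exists2 x : 'M[F]_(r0 + r1 + r2), in_gP x & ad_rank x = b) /\
  (forall x : 'M[F]_(r0 + r1 + r2), in_gP x -> (ad_rank x <= b)%N).

From HB Require Import structures.
From mathcomp Require Import all_boot all_order all_algebra zify.
Import GRing.Theory.

(* An element x of L = g(r0,r1,r2) is a strictly block upper triangular
   matrix with three blocks: A = x|_(b,m) (r0 x r1), B = x|_(m,t) (r1 x r2)
   and C = x|_(b,t) (r0 x r2).  The product of two such matrices only has a
   (b,t) block, so [x, y] = embed (A_x B_y - A_y B_x) (lemma bracketE).

   Writing A = P pid Q and B = P' pid Q' (Gaussian elimination,
   P Q P' Q' invertible, ranks at most r1), every A B' - A' B equals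
   P M Q' with M vanishing outside the "hook" {(i,j) | i < r1 or j < r1},
   a set of r1 (r0 + r2 - r1) positions.  Hence the image of ad_x lies in a
   space spanned by #|hook| vectors (commutator_sub_hook_span, card_hook).

   For x0 with A = B = pid, ad_x0 maps E_(b_i,m_j) and
   E_(m_i,t_j) to -/+ E_(b_i,t_j) for all (i,j) in the hook; these images
   are distinct standard basis vectors, so rank ad_x0 >= #|hook|. *)

Set Implicit Arguments. Unset Strict Implicit. Unset Printing Implicit Defensive.
Local Open Scope ring_scope.

Lemma card_ord_lt m k : (k <= m)%N -> #|[pred i : 'I_m | (i < k)%N]| = k.
Proof.
move=> km; have widen_inj : injective (widen_ord km).
  by move=> a b /(congr1 val) /= /val_inj.
rewrite -[RHS]card_ord -(card_image widen_inj); apply: eq_card => x /=.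
rewrite inE; apply/idP/imageP => [xk|[y _ ->]]; last by rewrite /= ltn_ord.
by exists (Ordinal xk) => //; apply: val_inj.
Qed.

Lemma rank_rowsub1 (F : fieldType) p q (f : 'I_p -> 'I_q) :
  injective f -> \rank (rowsub f (1%:M : 'M[F]_q)) = p.
Proof.
move=> f_inj; apply/eqP; rewrite eqn_leq rank_leq_row /=.
have id_prod : rowsub f (1%:M : 'M[F]_q) *m (rowsub f 1%:M)^T = 1%:M.
  by apply/matrixP => i j; rewrite -rowsubE !mxE eq_sym (inj_eq f_inj).
by rewrite -[X in (X <= _)%N](mxrank1 F p) -id_prod mxrankM_maxl.
Qed.

Lemma mul_delta_pid (F : fieldType) p q s (i : 'I_p) (j' : 'I_q) (j : 'I_s) :
  j' = j :> nat -> delta_mx i j' *m pid_mx q = delta_mx i j :> 'M[F]_(p, s).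
Proof.
move=> jj; apply/matrixP => a b.
rewrite mxE (bigD1 j') //= big1 => [|t /negbTE tj]; last by rewrite mxE tj andbF mul0r.
by rewrite !mxE eqxx andbT ltn_ord andbT addr0 jj -natrM mulnb [b == j]eq_sym.
Qed.

Lemma mul_pid_delta (F : fieldType) p q s (i' : 'I_q) (i : 'I_p) (j : 'I_s) :
  i' = i :> nat -> pid_mx q *m delta_mx i' j = delta_mx i j :> 'M[F]_(p, s).
Proof.
move=> ii; apply: trmx_inj.
by rewrite trmx_mul !trmx_delta tr_pid_mx (mul_delta_pid _ _ ii).
Qed.

Section Hook.
Variables (F : fieldType) (m k l : nat).

Definition hook : pred ('I_m * 'I_l) := fun p => (p.1 < k)%N || (p.2 < k)%N.

Lemma card_hook : (k <= m)%N -> (k <= l)%N -> #|hook| = (k * (m + l - k))%N.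
Proof.
move=> km kl.
have card_ord_ge n : (k <= n)%N -> #|[pred i : 'I_n | ~~ (i < k)%N]| = (n - k)%N.
  move=> kn; rewrite -[n in RHS]card_ord -(cardC [pred i : 'I_n | (i < k)%N]).
  by rewrite card_ord_lt ?addKn.
have : (#|hook| + (m - k) * (l - k))%N = (m * l)%N.
  rewrite -!card_ord_ge // -cardX -[m in RHS]card_ord -[l in RHS]card_ord.
  rewrite -card_prod -(cardC hook); congr (_ + _); apply: eq_card => -[i j].
  by rewrite !inE /hook negb_or.
nia.
Qed.

Definition hook_span (P : 'M[F]_m) (Q : 'M[F]_l) : 'M[F]_(#|hook|, m * l) :=
  \matrix_(s < #|hook|) mxvec (P *m delta_mx (enum_val s).1 (enum_val s).2 *m Q).

Lemma supported_sub_hook_span P Q (M : 'M[F]_(m, l)) :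
  (forall p, ~~ hook p -> M p.1 p.2 = 0) ->
  (mxvec (P *m M *m Q) <= hook_span P Q)%MS.
Proof.
move=> M0; rewrite (matrix_sum_delta M) pair_bigA /= mulmx_sumr mulmx_suml linear_sum.
rewrite (bigID hook) /= [X in _ + X]big1 ?addr0 => [|p /M0->]; last first.
  by rewrite scale0r mulmx0 mul0mx linear0.
rewrite big_enum_val /=; apply/submxP.
exists (\row_s M (enum_val s).1 (enum_val s).2).
rewrite mulmx_sum_row; apply: eq_bigr => s _.
by rewrite rowK mxE -scalemxAr -scalemxAl linearZ.
Qed.

(* pid_mx r *m X has no rows beyond r, Y *m pid_mx s no columns beyond s. *)
Lemma pid_commutator_support r s (X : 'M[F]_(k, l)) (Y : 'M[F]_(m, k)) p :
  (r <= k)%N -> (s <= k)%N -> ~~ hook p ->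
  (pid_mx r *m X - Y *m pid_mx s) p.1 p.2 = 0.
Proof.
case: p => i j hr hs; rewrite /hook /= negb_or -!leqNgt => /andP[ki kj] /=.
rewrite !mxE !big1 ?subrr // => t _; rewrite mxE.
  case: eqP => [->|] //=; last by rewrite mulr0.
  by rewrite (_ : (j < s)%N = false) ?mulr0 // ltnNge (leq_trans hs kj).
by rewrite (_ : (i < r)%N = false) ?andbF ?mul0r // ltnNge (leq_trans hr ki).
Qed.

Lemma commutator_sub_hook_span (A A' : 'M[F]_(m, k)) (B B' : 'M[F]_(k, l)) :
  (mxvec (A *m B' - A' *m B) <= hook_span (col_ebase A) (row_ebase B))%MS.
Proof.
set P := col_ebase A; set Q := row_ebase B.
pose M := pid_mx (\rank A) *m (row_ebase A *m B' *m invmx Q)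
          - (invmx P *m A' *m col_ebase B) *m pid_mx (\rank B).
have -> : A *m B' - A' *m B = P *m M *m Q.
  rewrite /M mulmxBr mulmxBl; congr (_ - _).
    by rewrite !mulmxA mulmxKV ?row_ebase_unit // mulmx_ebase.
  rewrite !mulmxA mulmxV ?col_ebase_unit // mul1mx -!mulmxA; congr (_ *m _).
  by rewrite mulmxA mulmx_ebase.
apply: supported_sub_hook_span => p.
by apply: pid_commutator_support; [exact: rank_leq_col | exact: rank_leq_row].
Qed.

End Hook.
(* The sizes m k l cannot all be inferred from a position, so make them
   explicit: hook m k l. *)
Arguments hook : clear implicits.

Definition blockE := (block_mxEul, block_mxEur, block_mxEdl, block_mxEdr,
                      col_mxEu, col_mxEd).

Section PosetAlgebra.
Variables (F : fieldType) (r0 r1 r2 : nat).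
Local Notation n := (r0 + r1 + r2)%N.

Definition bidx (i : 'I_r0) : 'I_n := lshift r2 (lshift r1 i).
Definition midx (i : 'I_r1) : 'I_n := lshift r2 (rshift r0 i).
Definition tidx (i : 'I_r2) : 'I_n := rshift (r0 + r1) i.

Lemma ord3_ind (P : 'I_n -> Prop) :
  (forall i, P (bidx i)) -> (forall i, P (midx i)) -> (forall i, P (tidx i)) ->
  forall u, P u.
Proof.
move=> Pb Pm Pt u; rewrite -(splitK u); case: (split u) => [u1|j] /=; last exact: Pt.
rewrite -(splitK u1); case: (split u1) => [i|i] /=; [exact: Pb | exact: Pm].
Qed.

Lemma plevel_b i : plevel (bidx i) = 0%N.
Proof. by rewrite /plevel /= ltn_ord. Qed.
Lemma plevel_m i : plevel (midx i) = 1%N.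
Proof. by rewrite /plevel /= ltnNge leq_addr /= ltn_add2l ltn_ord. Qed.
Lemma plevel_t i : plevel (tidx i) = 2%N.
Proof.
by rewrite /plevel /= !ltnNge !leq_addr (leq_trans (leq_addr r1 r0)) ?leq_addr.
Qed.
Definition plevelE := (plevel_b, plevel_m, plevel_t).

Definition of_blocks
    (A : 'M[F]_(r0, r1)) (B : 'M[F]_(r1, r2)) (C : 'M[F]_(r0, r2)) : 'M[F]_n :=
  block_mx (block_mx 0 A 0 0) (col_mx C B) 0 0.

Definition bm (x : 'M[F]_n) : 'M[F]_(r0, r1) := ursubmx (ulsubmx x).
Definition mt (x : 'M[F]_n) : 'M[F]_(r1, r2) := dsubmx (ursubmx x).
Definition bt (x : 'M[F]_n) : 'M[F]_(r0, r2) := usubmx (ursubmx x).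

Lemma in_gP_of_blocks (x : 'M[F]_n) :
  in_gP x <-> x = of_blocks (bm x) (mt x) (bt x).
Proof.
split=> [hx|->]; last first.
  apply: ord3_ind => i; apply: ord3_ind => j; rewrite /pprec !plevelE //= => _;
  by rewrite /of_blocks ?blockE ?mxE.
apply/matrixP; apply: ord3_ind => i; apply: ord3_ind => j;
  by rewrite /of_blocks ?blockE !mxE //; apply: hx; rewrite /pprec !plevelE.
Qed.

Lemma of_blocksK A B C :
  [/\ bm (of_blocks A B C) = A, mt (of_blocks A B C) = B & bt (of_blocks A B C) = C].
Proof.
by rewrite /bm /mt /bt /of_blocks block_mxKul !block_mxKur col_mxKu col_mxKd.
Qed.

Lemma of_blocks_in A B C : in_gP (of_blocks A B C).
Proof. by apply/in_gP_of_blocks; case: (of_blocksK A B C) => -> -> ->. Qed.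

(* Only the paths b < m < t survive in a product. *)
Lemma of_blocks_mul A B C A' B' C' :
  of_blocks A B C *m of_blocks A' B' C' = of_blocks 0 0 (A *m B').
Proof.
rewrite /of_blocks mulmx_block mulmx_block mul_block_col.
by rewrite !(mulmx0, mul0mx, addr0, add0r).
Qed.

Definition embed (C : 'M[F]_(r0, r2)) : 'M[F]_n := of_blocks 0 0 C.

Fact embed_is_linear : linear embed.
Proof.
move=> a C D; rewrite /embed /of_blocks scale_block_mx add_block_mx.
rewrite !scale_col_mx !add_col_mx.
by rewrite !(row_mx0, col_mx0, block_mx0, scaler0, addr0).
Qed.
HB.instance Definition _ := GRing.isLinear.Build F _ _ _ embed embed_is_linear.

Lemma mxvec_embed C : mxvec (embed C) = mxvec C *m lin_mx embed.
Proof. exact: esym (mul_vec_lin embed C). Qed.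

Lemma of_blocks_bracket A B C A' B' C' :
  lie_br (of_blocks A B C) (of_blocks A' B' C') = embed (A *m B' - A' *m B).
Proof. by rewrite /lie_br !of_blocks_mul linearB. Qed.

Lemma bracketE (x y : 'M[F]_n) : in_gP x -> in_gP y ->
  lie_br x y = embed (bm x *m mt y - bm y *m mt x).
Proof.
by move=> /in_gP_of_blocks {1}-> /in_gP_of_blocks {1}->; rewrite of_blocks_bracket.
Qed.

Lemma delta_in (p q : 'I_n) : pprec p q -> in_gP (delta_mx p q : 'M[F]_n).
Proof.
move=> hpq u v npq; rewrite mxE.
by case: eqP => [eu|]; case: eqP => [ev|] //=; subst; rewrite hpq in npq.
Qed.

Lemma ad_mx_row (x : 'M[F]_n) p q : pprec p q ->
  row (enum_rank (p, q)) (ad_mx x) = mxvec (lie_br x (delta_mx p q)).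
Proof. by move=> hpq; rewrite rowK enum_rankK /= hpq. Qed.

(* Upper bound: the rows of ad_mx x lie in the image under embed of the
   span of #|hook| vectors given by commutator_sub_hook_span. *)
Lemma ad_rank_le_hook (x : 'M[F]_n) :
  in_gP x -> (ad_rank x <= #|hook r0 r1 r2|)%N.
Proof.
move=> hx; pose S := hook_span r1 (col_ebase (bm x)) (row_ebase (mt x))
                     *m lin_mx embed.
have ad_sub : (ad_mx x <= S)%MS.
  apply/row_subP => s; rewrite rowK /=; case: ifP => hpq; last exact: sub0mx.
  rewrite bracketE //; last exact: delta_in.
  by rewrite mxvec_embed submxMr // commutator_sub_hook_span.
rewrite /ad_rank (leq_trans (mxrankS ad_sub)) // (leq_trans (mxrankM_maxl _ _)) //.
exact: rank_leq_row.
Qed.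

Lemma delta_bm i j : delta_mx (bidx i) (midx j) = of_blocks (delta_mx i j) 0 0.
Proof.
apply/matrixP; apply: ord3_ind => a; apply: ord3_ind => b;
by rewrite /of_blocks ?blockE !mxE ?eq_shift ?andbF.
Qed.

Lemma delta_mt i j : delta_mx (midx i) (tidx j) = of_blocks 0 (delta_mx i j) 0.
Proof.
apply/matrixP; apply: ord3_ind => a; apply: ord3_ind => b;
by rewrite /of_blocks ?blockE !mxE ?eq_shift ?andbF.
Qed.

Lemma delta_bt i j : delta_mx (bidx i) (tidx j) = embed (delta_mx i j).
Proof.
apply/matrixP; apply: ord3_ind => a; apply: ord3_ind => b;
by rewrite /embed /of_blocks ?blockE !mxE ?eq_shift ?andbF.
Qed.

Definition x0 : 'M[F]_n := of_blocks (pid_mx r1) (pid_mx r1) 0.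

Lemma x0_bracket_bm (i : 'I_r0) (j' : 'I_r1) (j : 'I_r2) : j' = j :> nat ->
  lie_br x0 (delta_mx (bidx i) (midx j')) = - embed (delta_mx i j).
Proof.
move=> jj; rewrite delta_bm of_blocks_bracket mulmx0 sub0r.
by rewrite (mul_delta_pid _ _ jj) linearN.
Qed.

Lemma x0_bracket_mt (i' : 'I_r1) (i : 'I_r0) (j : 'I_r2) : i' = i :> nat ->
  lie_br x0 (delta_mx (midx i') (tidx j)) = embed (delta_mx i j).
Proof.
by move=> ii; rewrite delta_mt of_blocks_bracket mul0mx subr0 (mul_pid_delta _ _ ii).
Qed.

Definition hook_rows : 'M[F]_(#|hook r0 r1 r2|, n * n) :=
  rowsub (fun s => mxvec_index (bidx (enum_val s).1) (tidx (enum_val s).2)) 1%:M.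

Lemma row_hook_rows s :
  row s hook_rows = mxvec (embed (delta_mx (enum_val s).1 (enum_val s).2)).
Proof. by rewrite row_rowsub row1 -mxvec_delta delta_bt. Qed.

Lemma rank_hook_rows : \rank hook_rows = #|hook r0 r1 r2|.
Proof.
apply: rank_rowsub1 => s s' /cast_ord_inj /enum_rank_inj.
by case=> /val_inj e1 /addnI /val_inj e2; apply/enum_val_inj/injective_projections.
Qed.

Lemma hook_rows_sub : (hook_rows <= ad_mx x0)%MS.
Proof.
apply/row_subP => s; rewrite row_hook_rows.
have : enum_val s \in hook r0 r1 r2 := enum_valP s.
case: (enum_val s) => i j; rewrite /hook /= => /orP[hi|hj].
  have := row_sub (enum_rank (midx (Ordinal hi), tidx j)) (ad_mx x0).
  by rewrite ad_mx_row ?(@x0_bracket_mt (Ordinal hi) i j) // /pprec !plevelE.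
have := row_sub (enum_rank (bidx i, midx (Ordinal hj))) (ad_mx x0).
rewrite ad_mx_row ?(@x0_bracket_bm i (Ordinal hj) j) ?linearN ?eqmx_opp //.
by rewrite /pprec !plevelE.
Qed.

Lemma hook_le_ad_rank_x0 : (#|hook r0 r1 r2| <= ad_rank x0)%N.
Proof. by rewrite -rank_hook_rows mxrankS // hook_rows_sub. Qed.
End PosetAlgebra.

Theorem theorem5 (F : closedFieldType) (charF0 : [pchar F]%R =i pred0)
  (r0 r1 r2 : nat) (h0 : (1 <= r0)%N) (h1 : (1 <= r1)%N) (h2 : (1 <= r2)%N)
  (h10 : (r1 < r0)%N) (h12 : (r1 < r2)%N) :
  is_breadth F r0 r1 r2 (r1 * (r0 + r2 - r1))%N.
Proof.
rewrite -(card_hook (ltnW h10) (ltnW h12)); split; last exact: ad_rank_le_hook.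
have x0_in : in_gP (x0 F r0 r1 r2) by exact: of_blocks_in.
exists (x0 F r0 r1 r2) => //; apply/eqP.
by rewrite eqn_leq hook_le_ad_rank_x0 andbT; apply: ad_rank_le_hook.
Qed.
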